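(* Let $G$ be the enhanced conflict graph of any traffic pattern in a multicast switch, and fix an input $i$. The subgraph of $G$ induced by the vertices representing subflows from input $i$ does not contain co-$P_3$ as an induced subgraph, where co-$P_3$ is the graph on three vertices $A,B,C$ with the single edge $BC$.
   Context: A flow is $(i,J)$ with input $i$ and nonempty fanout set $J$ of outputs; a traffic pattern is a finite set of flows; subflows are $(i,J,j)$ with $j\in J$. Enhanced conflict graph: one vertex per subflow; distinct subflows $(i,J,j),(i',J',j')$ adjacent iff $j=j'$, or $i=i'$ and $J\ne J'$. *)

From mathcomp Require Import all_boot.
Set Implicit Arguments. Unset Strict Implicit. Unset Printing Implicit Defensive.

Section Switch.
Variables (In Out : finType).

(* A flow (i, J): input i, fanout set J of outputs. *)
Definition flow := (In * {set Out})%type.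

Definition traffic_pattern (P : {set flow}) : Prop :=
  forall f, f \in P -> f.2 != set0.

(* Subflow (i, J, j) with j in J. *)
Definition subflow := (In * {set Out} * Out)%type.

(* Vertex set of the enhanced conflict graph of P: the subflows of flows in P. *)
Definition is_subflow (P : {set flow}) (v : subflow) : bool :=
  ((v.1.1, v.1.2) \in P) && (v.2 \in v.1.2).

Definition ecg_adj (v w : subflow) : bool :=
  (v != w) && ((v.2 == w.2) || ((v.1.1 == w.1.1) && (v.1.2 != w.1.2))).

Definition has_induced_coP3_at (P : {set flow}) (i : In) : Prop :=
  exists a b c : subflow,
    [/\ is_subflow P a && (a.1.1 == i),
        is_subflow P b && (b.1.1 == i),
        is_subflow P c && (c.1.1 == i),
        [&& a != b, a != c & b != c] &
        [&& ~~ ecg_adj a b, ~~ ecg_adj a c & ecg_adj b c]].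

End Switch.

From mathcomp Require Import all_boot.

(* Two distinct subflows from the same input are non-adjacent exactly when
   they belong to the same flow, and subflows of one flow are pairwise
   non-adjacent; so non-adjacency is transitive on the subflows of an input,
   which rules out co-P3. *)

Section SameInput.
Context {In Out : finType}.
Implicit Types v w : subflow In Out.

Lemma ecg_nonadj_same_fanout {v w} :
  v.1.1 = w.1.1 -> v != w -> ~~ ecg_adj v w -> v.1.2 = w.1.2.
Proof.
by move=> eqi nvw; rewrite /ecg_adj nvw eqi eqxx /= negb_or negbK => /andP[_ /eqP].
Qed.

Lemma ecg_nonadj_same_flow {v w} : v.1 = w.1 -> ~~ ecg_adj v w.
Proof.
move=> eqf; rewrite /ecg_adj eqf !eqxx /= orbF.
apply/negP=> /andP[/eqP nvw /eqP eq2]; apply: nvw.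
by move: v w eqf eq2 => [? ?] [? ?] /= -> ->.
Qed.

End SameInput.

Theorem lemma2 (In Out : finType) (P : {set flow In Out}) (i : In) :
  traffic_pattern P -> ~ has_induced_coP3_at P i.
Proof.
move=> _ [a [b [c [/andP[_ /eqP ai] /andP[_ /eqP bi] /andP[_ /eqP ci]]]]].
case/and3P=> nab nac _ /and3P[nadj_ab nadj_ac adj_bc].
have Jab := ecg_nonadj_same_fanout (etrans ai (esym bi)) nab nadj_ab.
have Jac := ecg_nonadj_same_fanout (etrans ai (esym ci)) nac nadj_ac.
have eq_bc : b.1 = c.1.
  by move: b c bi ci Jab Jac {nab nac nadj_ab nadj_ac adj_bc} => [[? ?] ?] [[? ?] ?] /= -> -> <- <-.
by move: adj_bc; rewrite (negbTE (ecg_nonadj_same_flow eq_bc)).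
Qed.
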